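(* Let $\mathbf{a}\in\mathbb{Z}_{\ge0}^n$ with $\mathbf{a}\neq\mathbf{0}$, let $0<\beta<1$, let $\epsilon$ satisfy $0<\epsilon<1$ and let $c_1>0$ with $0<c_1\epsilon<1$. If $1-\beta\le \dfrac{c_1\epsilon}{n\|\mathbf{a}\|_1}$, then $$(1-c_1\epsilon)\,\mathrm{Vol}(P_{\mathbf{a}})\le \mathrm{Vol}\Big(\bigcup_{k=0}^\infty Q_k\Big)\le \mathrm{Vol}(P_{\mathbf{a}}).$$
   Context: For $\mathbf{c}\in\mathbb{R}^n$, $r\ge 0$, the cross-polytope ($L_1$-ball) is $C(\mathbf{c},r)=\{\mathbf{x}\in\mathbb{R}^n:\|\mathbf{x}-\mathbf{c}\|_1\le r\}$, where $\|\mathbf{u}\|_1=\sum_i|u_i|$. $P_{\mathbf{a}}=\mathrm{conv}\{\pm\mathbf{e}_1,\dots,\pm\mathbf{e}_n,\mathbf{a}\}=\mathrm{conv}(C(\mathbf{0},1)\cup\{\mathbf{a}\})$, with $\mathbf{e}_i$ the standard basis vectors. For a parameter $0<\beta<1$ and $k=0,1,2,\dots$, $Q_k=C((1-\beta^k)\mathbf{a},\beta^k)$. *)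

From HB Require Import structures.
From mathcomp Require Import all_boot all_order all_algebra.
From mathcomp Require Import all_classical all_reals all_analysis.
Set Implicit Arguments. Unset Strict Implicit. Unset Printing Implicit Defensive.
Import Order.TTheory GRing.Theory Num.Theory.
Local Open Scope classical_set_scope.
Local Open Scope ring_scope.

Section Defs.
Variables (R : realType) (n : nat).

Definition vec := 'I_n -> R.

Definition vadd (x y : vec) : vec := fun i => x i + y i.
Definition vsub (x y : vec) : vec := fun i => x i - y i.
Definition vscale (t : R) (x : vec) : vec := fun i => t * x i.

Definition basis_e (i : 'I_n) : vec := fun j => (i == j)%:R.

Definition l1norm (x : vec) : R := \sum_(i < n) `|x i|.

Definition cross_polytope (c : vec) (r : R) : set vec :=
  [set x | l1norm (vsub x c) <= r].

Definition conv_hull (S : set vec) : set vec :=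
  [set x | exists (m : nat) (lam : 'I_m -> R) (v : 'I_m -> vec),
     (forall j, 0 <= lam j) /\ \sum_(j < m) lam j = 1 /\
     (forall j, S (v j)) /\
     x = (fun i => \sum_(j < m) lam j * v j i)].

Definition box (a b : vec) : set vec := [set x | forall i, a i <= x i <= b i].
Definition box_vol (a b : vec) : R := \prod_(i < n) (b i - a i).

(* n-dimensional Lebesgue (outer) measure: infimum of total volumes of
   countable covers by closed boxes. *)
Definition vol (X : set vec) : \bar R :=
  ereal_inf [set s : \bar R | exists (a b : nat -> vec),
     (forall k i, a k i <= b k i) /\
     X `<=` \bigcup_k box (a k) (b k) /\
     s = (\sum_(0 <= k <oo) (box_vol (a k) (b k))%:E)%E].

End Defs.

Definition natvec (R : realType) (n : nat) (a : 'I_n -> nat) : vec R n :=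
  fun i => (a i)%:R.

Definition P_a (R : realType) (n : nat) (a : 'I_n -> nat) : set (vec R n) :=
  conv_hull [set v | (exists i, v = basis_e R i \/ v = vscale (-1) (basis_e R i))
                     \/ v = natvec R a].

Definition Q_k (R : realType) (n : nat) (a : 'I_n -> nat) (beta : R) (k : nat)
  : set (vec R n) :=
  cross_polytope (vscale (1 - beta ^+ k) (natvec R a)) (beta ^+ k).

(** The cross-polytopes [Q_k] have centres on the segment [[0, a]] and radii
    [1 - mu] at centre [mu a]; since [P_a] is exactly the union of all such
    [C(mu a, 1 - mu)], [0 <= mu <= 1], the upper bound is monotonicity of volume.
    For the lower bound, with [d = (1 - beta) |a|_1] and [rho = 1 - d], the
    dilate [rho P_a] lies in [\bigcup_k Q_k]: a point of [C(mu a, 1 - mu)] is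
    sent into the [Q_k] whose radius [beta^k] brackets [1 - rho mu] to within a
    factor [beta].  Hence [rho^n Vol(P_a) <= Vol(\bigcup_k Q_k)], and Bernoulli's
    inequality gives [rho^n >= 1 - n d >= 1 - c1 eps]. *)

From HB Require Import structures.
From mathcomp Require Import all_boot all_order all_algebra.
From mathcomp Require Import all_classical all_reals all_analysis.
From mathcomp Require Import lra ring.
Set Implicit Arguments. Unset Strict Implicit. Unset Printing Implicit Defensive.
Import Order.TTheory GRing.Theory Num.Theory.
Local Open Scope classical_set_scope.
Local Open Scope ring_scope.

Section L1Norm.
Variables (R : realType) (n : nat).
Implicit Types (x y : vec R n).

Lemma l1normD x y : l1norm (vadd x y) <= l1norm x + l1norm y.
Proof. by rewrite /l1norm -big_split; apply: ler_sum => i _; exact: ler_normD. Qed.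

Lemma l1normZ (c : R) x : l1norm (vscale c x) = `|c| * l1norm x.
Proof. by rewrite /l1norm mulr_sumr; apply: eq_bigr => i _; exact: normrM. Qed.

Lemma l1norm_sum (m : nat) (f : 'I_m -> vec R n) :
  l1norm (fun i => \sum_(j < m) f j i) <= \sum_(j < m) l1norm (f j).
Proof.
by rewrite /l1norm exchange_big; apply: ler_sum => i _; exact: ler_norm_sum.
Qed.

Lemma l1norm_basis (i : 'I_n) : l1norm (basis_e R i) = 1.
Proof.
rewrite /l1norm (bigD1 i) //= /basis_e eqxx normr1 big1 ?addr0 // => j.
by rewrite eq_sym => /negPf ->; rewrite normr0.
Qed.

Lemma sum_basis (c : 'I_n -> R) k : \sum_i c i * basis_e R i k = c k.
Proof.
rewrite (bigD1 k) //= /basis_e eqxx mulr1 big1 ?addr0 // => i /negPf ->.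
by rewrite mulr0.
Qed.

Lemma sum_basisN (c : 'I_n -> R) k :
  \sum_i c i * vscale (-1) (basis_e R i) k = - c k.
Proof.
by rewrite /vscale; under eq_bigr do rewrite mulN1r mulrN; rewrite sumrN sum_basis.
Qed.

End L1Norm.

Section CrossHull.
Variables (R : realType) (n : nat).
Implicit Types (x v : vec R n).

Definition cross_hull v : set (vec R n) :=
  conv_hull [set w | (exists i, w = basis_e R i \/ w = vscale (-1) (basis_e R i))
                     \/ w = v].

Lemma conv_hull_fin (I : finType) (S : set (vec R n)) (lam : I -> R)
    (w : I -> vec R n) :
  (forall j, 0 <= lam j) -> \sum_j lam j = 1 -> (forall j, S (w j)) ->
  conv_hull S (fun i => \sum_j lam j * w j i).
Proof.
move=> lam0 lam1 Sw.
exists #|@predT I|, (fun k => lam (enum_val k)), (fun k => w (enum_val k)).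
split=> //; split; first by rewrite -(big_enum_val (A := predT) lam).
split=> //; apply/funext => i.
by rewrite -(big_enum_val (A := predT) (fun j => lam j * w j i)).
Qed.

(* [mu] is the total weight on copies of [v]; every other vertex [+-e_i]
   has unit norm. *)
Lemma cross_hull_section v x : cross_hull v x ->
  exists2 mu, 0 <= mu <= 1 & l1norm (vsub x (vscale mu v)) <= 1 - mu.
Proof.
move=> [m [lam [w [lam0 [lam1 [Sw ->]]]]]].
pose onv j := `[< w j = v >].
pose mu := \sum_(j < m) (if onv j then lam j else 0).
have mu_rest : \sum_(j < m) (if onv j then 0 else lam j) = 1 - mu.
  rewrite -lam1 /mu -sumrB; apply: eq_bigr => j _.
  by case: (onv j); rewrite ?subrr ?subr0.
exists mu.
  apply/andP; split; first by apply: sumr_ge0 => j _; case: (onv j).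
  by rewrite -lam1; apply: ler_sum => j _; case: (onv j).
pose u j : vec R n := fun i => lam j * w j i - (if onv j then lam j else 0) * v i.
have -> : vsub (fun i => \sum_(j < m) lam j * w j i) (vscale mu v) =
          (fun i => \sum_(j < m) u j i).
  by apply/funext => i; rewrite /vsub /vscale /u sumrB /mu mulr_suml.
apply: le_trans; first exact: l1norm_sum.
rewrite -mu_rest.
apply: ler_sum => j _; rewrite /u /onv; case: asboolP => [-> | offv].
  by rewrite /l1norm big1 // => i _; rewrite subrr normr0.
have -> : (fun i => lam j * w j i - 0 * v i) = vscale (lam j) (w j).
  by apply/funext => i; rewrite mul0r subr0.
rewrite l1normZ ger0_norm //.
case: (Sw j) => [[i [-> | ->]] | /offv //]; first by rewrite l1norm_basis mulr1.
by rewrite l1normZ normrN1 mul1r l1norm_basis mulr1.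
Qed.

(* Write [y = x - mu v] as a combination of [+-e_i] with weights
   [(|y_i| +- y_i) / 2], and put the slack [1 - mu - |y|_1] equally on
   [+e_i0] and [-e_i0]. *)
Lemma cross_polytope_sub_hull (i0 : 'I_n) v (mu : R) : 0 <= mu <= 1 ->
  cross_polytope (vscale mu v) (1 - mu) `<=` cross_hull v.
Proof.
move=> /andP[mu0 mu1] x; rewrite /cross_polytope /=; set y := vsub x _ => hy.
set L := 1 - mu - l1norm y.
have L0 : 0 <= L by rewrite /L; lra.
pose lam (s : ('I_n + 'I_n) + 'I_1) : R := match s with
  | inl (inl i) => (`|y i| + y i) / 2 + (i == i0)%:R * L / 2
  | inl (inr i) => (`|y i| - y i) / 2 + (i == i0)%:R * L / 2
  | inr _ => mu end.
pose w (s : ('I_n + 'I_n) + 'I_1) : vec R n := match s with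
  | inl (inl i) => basis_e R i
  | inl (inr i) => vscale (-1) (basis_e R i)
  | inr _ => v end.
have -> : x = (fun k => \sum_s lam s * w s k).
  apply/funext => k; rewrite !big_sumType big_ord1 /= sum_basis sum_basisN.
  have : y k = x k - mu * v k by [].
  lra.
apply: conv_hull_fin.
- have slack0 i : 0 <= (i == i0)%:R * L / 2 by rewrite divr_ge0 ?mulr_ge0.
  case=> [[i|i]|_] //=; rewrite addr_ge0 // divr_ge0 //.
    by have := ler_norm (- y i); rewrite normrN; lra.
  by have := ler_norm (y i); lra.
- rewrite !big_sumType big_ord1 /= -big_split /=.
  have pair_sum (i : 'I_n) : (`|y i| + y i) / 2 + (i == i0)%:R * L / 2 +
      ((`|y i| - y i) / 2 + (i == i0)%:R * L / 2) = `|y i| + L * basis_e R i i0.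
    by rewrite /basis_e; field.
  under eq_bigr do rewrite pair_sum.
  rewrite big_split /= sum_basis /L /l1norm; lra.
- by case=> [[i|i]|_] /=; [left; exists i; left | left; exists i; right | right].
Qed.

End CrossHull.

Section Volume.
Variables (R : realType) (n : nat).
Implicit Types (X Y : set (vec R n)).

Lemma vol_ge0 X : (0 <= vol X)%E.
Proof.
apply: le_ereal_inf_tmp => s [a [b [ab [_ ->]]]].
apply: nneseries_ge0 => k _ _; rewrite lee_fin /box_vol.
by apply: prodr_ge0 => i _; rewrite subr_ge0.
Qed.

Lemma le_vol X Y : X `<=` Y -> (vol X <= vol Y)%E.
Proof.
move=> XY; apply: ereal_inf_le_tmp => s [a [b [ab [cover ->]]]].
by exists a, b; split=> //; split=> //; exact: subset_trans cover.
Qed.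

Lemma box_vol_scale (r : R) (a b : vec R n) :
  box_vol (vscale r a) (vscale r b) = r ^+ n * box_vol a b.
Proof.
rewrite /box_vol /vscale -[in r ^+ n](card_ord n) -prodr_const -big_split /=.
by apply: eq_bigr => i _; rewrite mulrBr.
Qed.

(* Shrinking a box cover of [Y] by [rho^-1] gives a box cover of [X]. *)
Lemma vol_dilate_le (rho : R) X Y : 0 < rho ->
  (forall x, X x -> Y (vscale rho x)) -> ((rho ^+ n)%:E * vol X <= vol Y)%E.
Proof.
move=> rho0 XY; apply: le_ereal_inf_tmp => s [a [b [ab [cover ->]]]].
have irho0 : 0 <= rho^-1 by rewrite invr_ge0 ltW.
have box_ge0 k : (0 <= (box_vol (a k) (b k))%:E)%E.
  by rewrite lee_fin; apply: prodr_ge0 => i _; rewrite subr_ge0.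
have volX : (vol X <=
    (rho^-1 ^+ n)%:E * \sum_(0 <= k <oo) (box_vol (a k) (b k))%:E)%E.
  rewrite -nneseriesZl //; apply: ereal_inf_lbound.
  exists (fun k => vscale rho^-1 (a k)), (fun k => vscale rho^-1 (b k)).
  split; first by move=> k i; apply: ler_wpM2l.
  split; last by apply: eq_eseriesr => k _; rewrite box_vol_scale.
  move=> x /XY /cover [k _ xk]; exists k => // i; have /andP[] := xk i.
  rewrite /vscale => aki bki.
  have -> : x i = rho^-1 * (rho * x i) by rewrite mulrA mulVf ?mul1r ?gt_eqF.
  by rewrite !ler_wpM2l.
have rhon0 : (0 <= (rho ^+ n)%:E)%E by rewrite lee_fin exprn_ge0 ?ltW.
move: (lee_wpmul2l rhon0 volX).
by rewrite muleA -EFinM -exprMn mulfV ?gt_eqF // expr1n mul1e.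
Qed.

End Volume.

Lemma bernoulli_ineq (R : realDomainType) (m : nat) (d : R) : 0 <= d <= 1 ->
  1 - m%:R * d <= (1 - d) ^+ m.
Proof.
move=> /andP[d0 d1]; elim: m => [|m IH]; first by rewrite expr0 mul0r subr0.
rewrite exprSr -natr1.
have step : (1 - m%:R * d) * (1 - d) <= (1 - d) ^+ m * (1 - d).
  by apply: ler_wpM2r => //; lra.
have : 0 <= m%:R * d * d by rewrite !mulr_ge0.
nra.
Qed.

Lemma expr_bracket (R : realType) (beta t : R) : 0 < beta < 1 -> 0 < t <= 1 ->
  exists k, beta ^+ k.+1 <= t <= beta ^+ k.
Proof.
move=> /andP[b0 b1] /andP[t0 t1].
have [N betaN] : exists N, beta ^+ N < t.
  have := @cvg_expr R beta; rewrite ger0_norm ?ltW // => /(_ b1) cvg0.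
  by have [N _ HN] := cvgr_lt _ cvg0 t t0; exists N; apply: (HN N) => /=.
have below : exists k, beta ^+ k.+1 <= t.
  exists N; rewrite exprS; apply: ltW; apply: le_lt_trans betaN.
  by rewrite ler_piMl ?exprn_ge0 ?ltW.
case: (ex_minnP below) => k betak kmin; exists k; rewrite betak /=.
case: k betak kmin => [|k] _ kmin; first by rewrite expr0.
by rewrite leNgt; apply/negP => /ltW /kmin; rewrite ltnn.
Qed.

(* With [t = 1 - rho mu] and [beta^(k+1) <= t <= beta^k], one has
   [rho x - (1 - beta^k) v = (beta^k - t) v + rho (x - mu v)], and
   [beta^k - t <= (1 - beta) beta^k] makes the error fit in [d = 1 - rho]. *)
Lemma dilate_section_sub_cross (R : realType) (n : nat) (v x : vec R n)
    (beta mu : R) :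
  0 < beta < 1 -> 1 <= l1norm v -> 0 < 1 - (1 - beta) * l1norm v ->
  0 <= mu <= 1 -> l1norm (vsub x (vscale mu v)) <= 1 - mu ->
  exists k, cross_polytope (vscale (1 - beta ^+ k) v) (beta ^+ k)
              (vscale (1 - (1 - beta) * l1norm v) x).
Proof.
move=> /andP[b0 b1] v1; set A := l1norm v; set rho := 1 - _ => rho0.
move=> /andP[mu0 mu1]; set y := vsub x _ => hy.
set t := 1 - rho * mu.
have rhomu : 0 <= rho * mu <= rho by apply/andP; split; nra.
have rho1 : rho < 1 by rewrite /rho /A; nra.
have [k /andP[betak1 betak]] : exists k, beta ^+ k.+1 <= t <= beta ^+ k.
  by apply: expr_bracket; rewrite ?b0 //; apply/andP; split; rewrite /t; lra.
exists k; rewrite /cross_polytope /=.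
have -> : vsub (vscale rho x) (vscale (1 - beta ^+ k) v) =
          vadd (vscale (beta ^+ k - t) v) (vscale rho y).
  by apply/funext => i; rewrite /vsub /vadd /vscale /y /t /vsub /vscale; ring.
apply: le_trans; first exact: l1normD.
rewrite !l1normZ (ger0_norm (ltW rho0)) ger0_norm ?subr_ge0 //.
set p := beta ^+ k in betak betak1 *.
have p1 : p <= 1 by rewrite exprn_ile1 ?ltW.
have ry : rho * l1norm y <= rho - rho * mu.
  by rewrite -[X in X - _]mulr1 -mulrBr ler_wpM2l // ltW.
have gap : (p - t) * (A - 1) <= (1 - beta) * A.
  have pt : p - t <= 1 - beta by move: betak1; rewrite exprS -/p; nra.
  apply: le_trans (_ : (1 - beta) * (A - 1) <= _); last nra.
  by rewrite ler_wpM2r ?subr_ge0.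
have splitA : (p - t) * A = (p - t) * (A - 1) + (p - t) by ring.
have : t = 1 - rho * mu by []; have : rho = 1 - (1 - beta) * A by [].
rewrite -/A; lra.
Qed.

Theorem mainTheorem2 (R : realType) (n : nat) (a : 'I_n -> nat) (beta eps c1 : R) :
  (exists i, a i <> 0%N) ->
  0 < beta < 1 ->
  0 < eps < 1 ->
  0 < c1 ->
  0 < c1 * eps < 1 ->
  1 - beta <= c1 * eps / (n%:R * (\sum_(i < n) a i)%N%:R) ->
  (((1 - c1 * eps)%:E * vol (@P_a R n a) <= vol (\bigcup_k Q_k a beta k))%E /\
   (vol (\bigcup_k Q_k a beta k) <= vol (@P_a R n a))%E).
Proof.
move=> [i0 ai0] beta01 _ _ /andP[ce0 ce1] hbeta.
have /andP[b0 b1] := beta01.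
set A := l1norm (natvec R a).
have A_sum : A = (\sum_(i < n) a i)%N%:R.
  by rewrite /A /l1norm natr_sum; apply: eq_bigr => i _; rewrite ger0_norm.
have A1 : 1 <= A by rewrite A_sum ler1n (bigD1 i0) //=; case: (a i0) ai0.
have n1 : 1 <= n%:R :> R by rewrite ler1n (leq_ltn_trans (leq0n i0) (ltn_ord i0)).
set d := (1 - beta) * A.
have nd : n%:R * d <= c1 * eps.
  move: hbeta; rewrite -A_sum ler_pdivlMr ?mulr_gt0 ?(lt_le_trans ltr01) //.
  by rewrite mulrC -mulrA [A * _]mulrC.
have d0 : 0 <= d by rewrite mulr_ge0 ?(le_trans ler01 A1) // subr_ge0 ltW.
have d1 : d < 1 by apply: le_lt_trans ce1; apply: le_trans nd; rewrite ler_peMl.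
split; last first.
  apply: le_vol => x [k _ Qx].
  apply: (@cross_polytope_sub_hull R n i0 _ (1 - beta ^+ k)).
    by have := exprn_ge0 k (ltW b0); have := exprn_ile1 k (ltW b0) (ltW b1); lra.
  by rewrite opprB addrCA subrr addr0.
have rho0 : 0 < 1 - d by rewrite subr_gt0.
apply: le_trans (vol_dilate_le rho0 _); last first.
  move=> x /(@cross_hull_section R n (natvec R a) x) [mu mu01 xmu].
  have [k xk] := dilate_section_sub_cross beta01 A1 rho0 mu01 xmu.
  by exists k.
rewrite lee_wpmul2r ?vol_ge0 // lee_fin.
apply: le_trans (bernoulli_ineq n _); first by rewrite lerD2l lerN2.
by rewrite d0 ltW.
Qed.
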